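(* Let $f$ be a $k$-term DNF over $x_1,\dots,x_n$ and let $\mathcal{F}$ be a set of eligible pairs that is fully expressive for $f$. Then $f$ can be written as an $\mathcal{F}$-augmented PTF of degree at most $d_{\max}=O(\sqrt{k}\log k)$ and weight at most $W_{\max}=2^{O(\sqrt{k}\log^2 k)}$.
   Context: Variables $x_i$ and terms take values in $\{0,1\}$; terms are sets of literals. An eligible pair is $(T',R_{T'})$ where $T'$ is a term (candidate stem) and $R_{T'}\subseteq[n]$ is disjoint from the variables occurring in $T'$. For a set $\mathcal{F}$ of eligible pairs (always assumed to contain a pair whose term is the empty term, i.e. the constant $1$), an $\mathcal{F}$-augmented monomial of degree $d$ is a product $T'\cdot\prod_{i\in S}x_i$ with $(T',R_{T'})\in\mathcal{F}$, $S\subseteq R_{T'}$ and $|S|\le d$. An $\mathcal{F}$-augmented PTF of degree $d$ and weight $W$ is a function $\mathbf{1}[p(x)\ge\theta]$ where $p$ is a linear combination, with integer coefficients whose absolute values sum to at most $W$, of $\mathcal{F}$-augmented monomials of degree at most $d$. A term $T'$ is a valid stem of a term $T$ if $T'\subseteq T$ and $|T\setminus T'|\le 2k$. $\mathcal{F}$ is fully expressive for $f$ if for every term $T_i$ of $f$ there is $(T',R_{T'})\in\mathcal{F}$ such that $T'$ is a valid stem of $T_i$ and every variable of $T_i\setminus T'$ lies in $R_{T'}$. *)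

From Stdlib Require Import ZArith Reals.
From mathcomp Require Import all_boot.
Set Implicit Arguments. Unset Strict Implicit. Unset Printing Implicit Defensive.

(* A literal over x_1..x_n: (i, b) means "x_i = b" (b = false is the negated literal). *)
Definition lit (n : nat) : finType := ('I_n * bool)%type.
Definition term (n : nat) := {set lit n}.

Definition lit_val n (x : 'I_n -> bool) (l : lit n) : bool := x l.1 == l.2.
Definition term_val n (x : 'I_n -> bool) (T : term n) : bool :=
  [forall l in T, lit_val x l].

Definition vars n (T : term n) : {set 'I_n} := [set l.1 | l in T].

Definition dnf_val n (f : seq (term n)) (x : 'I_n -> bool) : bool :=
  has (term_val x) f.

Definition eligible n (p : term n * {set 'I_n}) : Prop :=
  [disjoint p.2 & vars p.1].

(* T' is a valid stem of T (k the number of terms of the DNF) *)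
Definition valid_stem n (k : nat) (T' T : term n) : Prop :=
  T' \subset T /\ (#|T :\: T'| <= 2 * k)%N.

Definition fully_expressive n (k : nat) (F : {set term n * {set 'I_n}})
    (f : seq (term n)) : Prop :=
  forall T, T \in f -> exists2 p, p \in F &
    valid_stem k p.1 T /\ vars (T :\: p.1) \subset p.2.

(* An F-augmented polynomial: a list of (integer coefficient, (stem T', set S))
   standing for  sum c * T' * prod_{i in S} x_i. *)
Definition aug_poly n := seq (Z * (term n * {set 'I_n})).

Definition mono_val n (x : 'I_n -> bool) (m : term n * {set 'I_n}) : Z :=
  if term_val x m.1 && [forall i in m.2, x i] then 1%Z else 0%Z.

Definition poly_val n (p : aug_poly n) (x : 'I_n -> bool) : Z :=
  foldr (fun e acc => (e.1 * mono_val x e.2 + acc)%Z) 0%Z p.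

Definition poly_weight n (p : aug_poly n) : Z :=
  foldr (fun e acc => (Z.abs e.1 + acc)%Z) 0%Z p.

Definition aug_monos_of_degree n (F : {set term n * {set 'I_n}}) (d : nat)
    (p : aug_poly n) : Prop :=
  forall e, List.In e p -> exists R, (e.2.1, R) \in F /\
    e.2.2 \subset R /\ (#|e.2.2| <= d)%N.

Definition aug_PTF n (F : {set term n * {set 'I_n}}) (d : nat) (W : Z)
    (g : ('I_n -> bool) -> bool) : Prop :=
  exists (p : aug_poly n) (theta : R),
    aug_monos_of_degree F d p /\ (poly_weight p <= W)%Z /\
    forall x, g x = true <-> Rle theta (IZR (poly_val p x)).

(* Fix a term T of f and a pair (T', R) of F witnessing full expressiveness, and let r be the
   at most 2k residual literals T \ T'.  With M = 2k, the integer
   u = M + 1 - 2 * #{falsified literals of r} is a degree-1 polynomial in the variables of R; it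
   equals M + 1 when T holds and lies strictly between -M and M when T' holds but T fails.
   The scaled Chebyshev polynomial M^a T_a(u / M) with a = O(sqrt k) is bounded by M^a in
   absolute value on (-M, M) but is at least 2 M^a at M + 1, so raising its square to the power
   L = O(log k) separates the two cases by a factor 4^L > k.  Multiplying by the stem T' and
   summing over the k terms yields an F-augmented polynomial of degree 2aL = O(sqrt k log k)
   which exceeds 4^L M^(2aL) exactly when f holds, and its weight k (2k+5)^(4aL) is
   2^O(sqrt k log^2 k). *)

From Stdlib Require Import ZArith Reals Lia Lra Psatz.
From mathcomp Require Import all_boot zify.

Set Implicit Arguments. Unset Strict Implicit. Unset Printing Implicit Defensive.

Lemma forall_in_setU (T : finType) (P : pred T) (A B : {set T}) :
  [forall i in A :|: B, P i] = [forall i in A, P i] && [forall i in B, P i].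
Proof.
apply/forall_inP/andP => [H|[/forall_inP HA /forall_inP HB] i].
  by split; apply/forall_inP => i Hi; apply: H; rewrite inE Hi ?orbT.
by rewrite inE => /orP[/HA|/HB].
Qed.

Lemma forall_in_set0 (T : finType) (P : pred T) : [forall i in set0, P i].
Proof. by apply/forall_inP => i; rewrite inE. Qed.

Lemma forall_in_set1 (T : finType) (P : pred T) (j : T) : [forall i in [set j], P i] = P j.
Proof. by apply/forall_inP/idP => [|Pj i /set1P ->//]; apply; rewrite set11. Qed.

Section AugmentedPolynomials.
Variable n : nat.
Implicit Types (p q : aug_poly n) (x : 'I_n -> bool).
Local Open Scope Z_scope.

Lemma term_val_setU x (T1 T2 : term n) :
  term_val x (T1 :|: T2) = term_val x T1 && term_val x T2.
Proof. exact: forall_in_setU. Qed.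

Lemma poly_weight_ge0 p : 0 <= poly_weight p.
Proof. elim: p => [|e p IH] /=; lia. Qed.

Lemma poly_val_cat p q x : poly_val (p ++ q) x = poly_val p x + poly_val q x.
Proof. elim: p => [|e p IH] /=; lia. Qed.

Lemma poly_weight_cat p q : poly_weight (p ++ q) = poly_weight p + poly_weight q.
Proof. elim: p => [|e p IH] /=; lia. Qed.

Definition mono_mul (e1 e2 : Z * (term n * {set 'I_n})) : Z * (term n * {set 'I_n}) :=
  (e1.1 * e2.1, (e1.2.1 :|: e2.2.1, e1.2.2 :|: e2.2.2)).

Definition poly_mul p q : aug_poly n := List.flat_map (fun e => List.map (mono_mul e) q) p.

Lemma mono_val_mul x e1 e2 :
  mono_val x (mono_mul e1 e2).2 = mono_val x e1.2 * mono_val x e2.2.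
Proof.
rewrite /mono_val /= term_val_setU forall_in_setU.
by case: (term_val x e1.2.1); case: (term_val x e2.2.1);
   case: [forall i in e1.2.2, x i]; case: [forall i in e2.2.2, x i].
Qed.

Lemma poly_val_map_mul e q x :
  poly_val (List.map (mono_mul e) q) x = e.1 * mono_val x e.2 * poly_val q x.
Proof. by elim: q => [|e2 q IH] /=; rewrite ?mono_val_mul ?IH; ring. Qed.

Lemma poly_weight_map_mul e q :
  poly_weight (List.map (mono_mul e) q) = Z.abs e.1 * poly_weight q.
Proof. by elim: q => [|e2 q IH] /=; rewrite ?Z.abs_mul ?IH; ring. Qed.

Lemma poly_val_mul p q x : poly_val (poly_mul p q) x = poly_val p x * poly_val q x.
Proof. by elim: p => [|e p IH] //=; rewrite poly_val_cat IH poly_val_map_mul; ring. Qed.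

Lemma poly_weight_mul p q : poly_weight (poly_mul p q) = poly_weight p * poly_weight q.
Proof. by elim: p => [|e p IH] //=; rewrite poly_weight_cat IH poly_weight_map_mul; ring. Qed.

Lemma in_poly_mul e p q : List.In e (poly_mul p q) ->
  exists e1 e2, [/\ List.In e1 p, List.In e2 q & e = mono_mul e1 e2].
Proof.
move=> /List.in_flat_map [e1 [He1 /List.in_map_iff [e2 [<- He2]]]].
by exists e1, e2.
Qed.

End AugmentedPolynomials.

(* [cheb M u a] is [M ^ a * T_a (u / M)], where [T_a] is the Chebyshev polynomial
   of the first kind. *)
Fixpoint cheb (M u : Z) (a : nat) : Z :=
  match a with
  | 0 => 1%Z
  | 1 => u
  | (a'.+1 as a1).+1 => (2 * u * cheb M u a1 - M * M * cheb M u a')%Z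
  end.

Lemma Zpow_of_nat_succ (b : Z) (a : nat) : (b ^ Z.of_nat a.+1 = b * b ^ Z.of_nat a)%Z.
Proof. by rewrite Nat2Z.inj_succ Z.pow_succ_r //; exact: Nat2Z.is_nonneg. Qed.

Section ChebyshevBounds.
Variable M : Z.
Local Open Scope Z_scope.

Lemma chebSS u a : cheb M u a.+2 = 2 * u * cheb M u a.+1 - M * M * cheb M u a.
Proof. by []. Qed.

Lemma cheb_invariant u a :
  cheb M u a.+1 * cheb M u a.+1 - 2 * u * cheb M u a.+1 * cheb M u a
    + M * M * (cheb M u a * cheb M u a)
  = (M * M) ^ Z.of_nat a * (M * M - u * u).
Proof.
elim: a => [|a IH]; first by cbn [cheb Z.of_nat]; ring.
rewrite chebSS Zpow_of_nat_succ.
transitivity (M * M * ((M * M) ^ Z.of_nat a * (M * M - u * u))); last ring.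
rewrite -IH; ring.
Qed.

Lemma cheb_sqr_le u a : - M < u < M ->
  cheb M u a * cheb M u a <= (M * M) ^ Z.of_nat a.
Proof.
move=> Hu; have := cheb_invariant u a.
set p := cheb M u a; set q := cheb M u a.+1; move=> E.
have D : 0 < M * M - u * u by nia.
have := Z.square_nonneg (q - u * p); nia.
Qed.

Lemma cheb_growth a : 1 <= M ->
  M ^ Z.of_nat a * (M + Z.of_nat a * Z.of_nat a) <= M * cheb M (M + 1) a.
Proof.
move=> M1.
suff: M ^ Z.of_nat a * (M + Z.of_nat a * Z.of_nat a) <= M * cheb M (M + 1) a /\
      M ^ Z.of_nat a * (2 * Z.of_nat a + 1) <= cheb M (M + 1) a.+1 - M * cheb M (M + 1) a
  by case.
elim: a => [|a [IH1 IH2]]; first by cbn [cheb Z.of_nat]; rewrite Z.pow_0_r; lia.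
rewrite chebSS Zpow_of_nat_succ Nat2Z.inj_succ.
set p := cheb M (M + 1) a; set q := cheb M (M + 1) a.+1.
have P1 : 0 < M ^ Z.of_nat a by apply: Z.pow_pos_nonneg; lia.
have Hq : M * (M ^ Z.of_nat a * M) <= M * q by nia.
split; nia.
Qed.

Lemma cheb_ge_double a : 1 <= M <= Z.of_nat a * Z.of_nat a ->
  2 * M ^ Z.of_nat a <= cheb M (M + 1) a.
Proof.
move=> [M1 Ma]; have := cheb_growth (a := a) M1.
have : 0 <= M ^ Z.of_nat a by apply: Z.pow_nonneg; lia.
nia.
Qed.

End ChebyshevBounds.

Definition falsified n (x : 'I_n -> bool) (r : seq (lit n)) : Z :=
  Z.of_nat (count (predC (lit_val x)) r).

Section StemRepresentation.
Variables (n : nat) (T' : term n) (R : {set 'I_n}).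
Implicit Types (x : 'I_n -> bool) (g : ('I_n -> bool) -> Z).
Local Open Scope Z_scope.

Definition stem_repr (d : nat) (w : Z) g : Prop :=
  exists p : aug_poly n,
    [/\ forall e, List.In e p -> [/\ e.2.1 = T', e.2.2 \subset R & (#|e.2.2| <= d)%N],
        poly_weight p <= w
      & forall x, poly_val p x = Z.b2z (term_val x T') * g x].

Lemma stem_repr_weight_ge0 d w g : stem_repr d w g -> 0 <= w.
Proof. by case=> p [_ wp _]; have := poly_weight_ge0 (p := p); lia. Qed.

Lemma stem_repr_ext d w g1 g2 :
  (forall x, term_val x T' -> g1 x = g2 x) -> stem_repr d w g1 -> stem_repr d w g2.
Proof.
move=> E [p [Hp wp vp]]; exists p; split=> // x; rewrite vp.
by case: (boolP (term_val x T')) => [/E ->|].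
Qed.

Lemma stem_repr_weaken d1 d2 w1 w2 g :
  (d1 <= d2)%N -> w1 <= w2 -> stem_repr d1 w1 g -> stem_repr d2 w2 g.
Proof.
move=> d12 w12 [p [Hp wp vp]]; exists p; split=> //; last lia.
by move=> e /Hp [-> SR dS]; split=> //; exact: leq_trans dS d12.
Qed.

Lemma stem_repr_const c : stem_repr 0 (Z.abs c) (fun=> c).
Proof.
exists [:: (c, (T', set0))]; split=> /=; first by move=> e [<-|//]; rewrite sub0set cards0.
  lia.
by move=> x; rewrite /mono_val /= forall_in_set0 andbT; case: (term_val x T'); cbn [Z.b2z]; ring.
Qed.

Lemma stem_repr_var j : j \in R -> stem_repr 1 1 (fun x => Z.b2z (x j)).
Proof.
move=> jR; exists [:: (1, (T', [set j]))]; split=> /=.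
- by move=> e [<-|//]; rewrite sub1set jR cards1.
- lia.
- by move=> x; rewrite /mono_val /= forall_in_set1; case: (term_val x T'); case: (x j).
Qed.

Lemma stem_repr_add d w1 w2 g1 g2 : stem_repr d w1 g1 -> stem_repr d w2 g2 ->
  stem_repr d (w1 + w2) (fun x => g1 x + g2 x).
Proof.
move=> [p [Hp wp vp]] [q [Hq wq vq]]; exists (p ++ q); split.
- by move=> e /List.in_app_iff [/Hp|/Hq].
- rewrite poly_weight_cat; lia.
- by move=> x; rewrite poly_val_cat vp vq; ring.
Qed.

Lemma stem_repr_mul d1 d2 w1 w2 g1 g2 : stem_repr d1 w1 g1 -> stem_repr d2 w2 g2 ->
  stem_repr (d1 + d2) (w1 * w2) (fun x => g1 x * g2 x).
Proof.
move=> [p [Hp wp vp]] [q [Hq wq vq]]; exists (poly_mul p q); split.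
- move=> e /in_poly_mul [e1 [e2 [/Hp [s1 R1 d1S] /Hq [s2 R2 d2S] ->]]] /=.
  rewrite s1 s2 setUid subUset R1 R2; split=> //.
  exact: leq_trans (leq_card_setU _ _).1 (leq_add d1S d2S).
- rewrite poly_weight_mul; have := poly_weight_ge0 (p := p); have := poly_weight_ge0 (p := q); nia.
- by move=> x; rewrite poly_val_mul vp vq; case: (term_val x T'); cbn [Z.b2z]; ring.
Qed.

Lemma stem_repr_scale c d w g : stem_repr d w g ->
  stem_repr d (Z.abs c * w) (fun x => c * g x).
Proof. exact: stem_repr_mul (stem_repr_const c). Qed.

Lemma stem_repr_pow d w g L : stem_repr d w g ->
  stem_repr (d * L) (w ^ Z.of_nat L) (fun x => g x ^ Z.of_nat L).
Proof.
move=> Hg; elim: L => [|L IH]; first by rewrite muln0; exact: (stem_repr_const 1).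
rewrite mulnS Nat2Z.inj_succ Z.pow_succ_r; last exact: Nat2Z.is_nonneg.
apply: stem_repr_ext (stem_repr_mul Hg IH) => x _.
by rewrite Z.pow_succ_r //; exact: Nat2Z.is_nonneg.
Qed.

Lemma stem_repr_falsified_lit (l : lit n) : l.1 \in R ->
  stem_repr 1 2 (fun x => Z.b2z (~~ lit_val x l)).
Proof.
case: l => j [] /= jR.
- have := stem_repr_add (stem_repr_weaken (leq0n 1) (Z.le_refl _) (stem_repr_const 1))
                         (stem_repr_scale (-1) (stem_repr_var jR)).
  by apply: stem_repr_ext => x _; rewrite /lit_val /=; case: (x j).
- apply: stem_repr_ext (stem_repr_weaken (leqnn 1) _ (stem_repr_var jR)) => [x _|]; last lia.
  by rewrite /lit_val /=; case: (x j).
Qed.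

Lemma stem_repr_falsified (r : seq (lit n)) : all (fun l => l.1 \in R) r ->
  stem_repr 1 (2 * Z.of_nat (size r)) (fun x => falsified x r).
Proof.
elim: r => [_|l r IH].
  exact: stem_repr_weaken (leq0n 1) (Z.le_refl 0) (stem_repr_const 0).
case/andP => /stem_repr_falsified_lit lR /IH rR.
apply: stem_repr_ext (stem_repr_weaken (leqnn 1) _ (stem_repr_add lR rR)) => [x _|].
  by rewrite /falsified /= Nat2Z.inj_add; case: (~~ lit_val x l).
by have -> : size (l :: r) = (size r).+1 by []; lia.
Qed.

Lemma stem_repr_cheb M B wu u a : stem_repr 1 wu u -> 1 <= B -> 2 * wu + M * M <= B ->
  stem_repr a (B ^ Z.of_nat a) (fun x => cheb M (u x) a).
Proof.
move=> Hu B1 HB; have wu0 := stem_repr_weight_ge0 Hu.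
suff: stem_repr a (B ^ Z.of_nat a) (fun x => cheb M (u x) a) /\
      stem_repr a.+1 (B ^ Z.of_nat a.+1) (fun x => cheb M (u x) a.+1) by case.
elim: a => [|a [IH1 IH2]]; split=> //.
- exact: (stem_repr_const 1).
- by apply: stem_repr_weaken Hu => //; rewrite Z.pow_1_r; nia.
have IH1' := stem_repr_weaken (leq_trans (leqnSn a) (leq_addl 1 _)) (Z.le_refl _)
  (stem_repr_scale (- (M * M)) IH1).
have Hstep := stem_repr_add (stem_repr_mul (stem_repr_scale 2 Hu) IH2) IH1'.
apply: stem_repr_ext (stem_repr_weaken _ _ Hstep) => [x _ /=||]; first ring.
  by rewrite add1n.
rewrite !Zpow_of_nat_succ Z.abs_opp (Z.abs_eq (M * M)); last nia.
change (Z.abs 2) with 2; set P := B ^ Z.of_nat a.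
have P0 : 0 <= P by apply: Z.pow_nonneg; lia.
have MMP : 0 <= M * M * P by have := Z.square_nonneg M; nia.
have BP : 0 <= B * P by nia.
have := Z.mul_le_mono_nonneg_r _ _ _ BP HB; nia.
Qed.

End StemRepresentation.

Section Selector.
Variable n : nat.
Implicit Types (x : 'I_n -> bool) (r : seq (lit n)).
Local Open Scope Z_scope.

Definition selector (M : Z) (a L : nat) x r : Z :=
  (cheb M (M + 1 - 2 * falsified x r) a ^ 2) ^ Z.of_nat L.

Lemma selector_bounds M a L x r :
  1 <= M <= Z.of_nat a * Z.of_nat a -> Z.of_nat (size r) <= M ->
  [/\ 0 <= selector M a L x r,
      all (lit_val x) r ->
        4 ^ Z.of_nat L * ((M * M) ^ Z.of_nat a) ^ Z.of_nat L <= selector M a L x r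
    & ~~ all (lit_val x) r -> selector M a L x r <= ((M * M) ^ Z.of_nat a) ^ Z.of_nat L].
Proof.
move=> HM Hr; rewrite /selector /falsified.
have cnt_le := count_size (predC (lit_val x)) r.
split.
- by apply: Z.pow_nonneg; rewrite Z.pow_2_r; exact: Z.square_nonneg.
- move=> Hall; have -> : M + 1 - 2 * Z.of_nat (count (predC (lit_val x)) r) = M + 1.
    suff -> : count (predC (lit_val x)) r = 0%N by lia.
    by apply/eqP; rewrite -leqn0 leqNgt -has_count has_predC Hall.
  have Hc := cheb_ge_double (a := a) HM.
  have Ma : 0 <= M ^ Z.of_nat a by apply: Z.pow_nonneg; lia.
  rewrite -Z.pow_mul_l; apply: Z.pow_le_mono_l.
  rewrite Z.pow_mul_l Z.pow_2_r; nia.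
- rewrite -has_predC has_count => cnt_gt0.
  apply: Z.pow_le_mono_l; split; first by rewrite Z.pow_2_r; exact: Z.square_nonneg.
  rewrite Z.pow_2_r; apply: cheb_sqr_le; lia.
Qed.

Lemma stem_repr_selector (T' : term n) (R : {set 'I_n}) M a L r :
  all (fun l => l.1 \in R) r -> 0 <= M -> Z.of_nat (size r) <= M ->
  stem_repr T' R (a * 2 * L) (((M + 5) ^ 2) ^ Z.of_nat (a * 2 * L)) (selector M a L ^~ r).
Proof.
move=> rR M0 Hr.
have Hu : stem_repr T' R 1 (5 * M + 1) (fun x => M + 1 - 2 * falsified x r).
  have H := stem_repr_add (stem_repr_weaken (leq0n 1) (Z.le_refl _) (stem_repr_const T' R (M + 1)))
                          (stem_repr_scale (-2) (stem_repr_falsified T' rR)).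
  apply: stem_repr_ext (stem_repr_weaken (leqnn 1) _ H) => [x _|]; first lia.
  change (Z.abs (-2)) with 2; rewrite Z.abs_eq; lia.
have Hc : stem_repr T' R a (((M + 5) ^ 2) ^ Z.of_nat a)
                    (fun x => cheb M (M + 1 - 2 * falsified x r) a).
  by apply: (stem_repr_cheb a Hu); nia.
have := stem_repr_pow L (stem_repr_pow 2 Hc).
by rewrite !Nat2Z.inj_mul !Z.pow_mul_r; try lia.
Qed.

End Selector.

Section DNFThreshold.
Variable n : nat.
Implicit Types (x : 'I_n -> bool) (F : {set term n * {set 'I_n}}).
Local Open Scope Z_scope.

Lemma term_val_stem x (T T' : term n) : T' \subset T ->
  term_val x T = term_val x T' && all (lit_val x) (enum (T :\: T')).
Proof.
move=> /subsetP TT'; rewrite /term_val.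
apply/forall_inP/andP => [H|[/forall_inP H' /allP Hr] l Tl].
  split; first by apply/forall_inP => l /TT'; apply: H.
  by apply/allP => l; rewrite mem_enum inE => /andP [_]; apply: H.
case: (boolP (l \in T')) => [/H' //|l'T]; apply: Hr; by rewrite mem_enum inE l'T.
Qed.

Lemma stem_repr_aug_monos F (T' : term n) R d w g : (T', R) \in F -> stem_repr T' R d w g ->
  exists P, [/\ aug_monos_of_degree F d P, poly_weight P <= w
    & forall x, poly_val P x = Z.b2z (term_val x T') * g x].
Proof.
move=> HF [P [HP wP vP]]; exists P; split=> // e /HP [-> SR dS].
by exists R.
Qed.

Lemma stem_selector_bounds x (T T' : term n) M a L : T' \subset T ->
  1 <= M <= Z.of_nat a * Z.of_nat a -> Z.of_nat (size (enum (T :\: T'))) <= M ->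
  let v := Z.b2z (term_val x T') * selector M a L x (enum (T :\: T')) in
  let theta := ((M * M) ^ Z.of_nat a) ^ Z.of_nat L in
  [/\ 0 <= v, term_val x T -> 4 ^ Z.of_nat L * theta <= v & ~~ term_val x T -> v <= theta].
Proof.
move=> TT' HM Hr v theta; rewrite /v (term_val_stem x TT').
have [s0 s_hi s_lo] := selector_bounds L x HM Hr.
have theta0 : 0 <= theta by apply/Z.pow_nonneg/Z.pow_nonneg; nia.
by case: (term_val x T'); cbn [Z.b2z andb]; split; lia.
Qed.

Lemma dnf_threshold_poly k F (f : seq (term n)) M a L :
  fully_expressive k F f -> 2 * Z.of_nat k <= M <= Z.of_nat a * Z.of_nat a -> 1 <= M ->
  let theta := ((M * M) ^ Z.of_nat a) ^ Z.of_nat L in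
  exists P, [/\ aug_monos_of_degree F (a * 2 * L) P,
    poly_weight P <= Z.of_nat (size f) * ((M + 5) ^ 2) ^ Z.of_nat (a * 2 * L)
    & forall x, [/\ 0 <= poly_val P x,
        dnf_val f x -> 4 ^ Z.of_nat L * theta <= poly_val P x
      & ~~ dnf_val f x -> poly_val P x <= Z.of_nat (size f) * theta]].
Proof.
move=> + HM M1 theta; elim: f => [_|T f IH Hfe].
  by exists [::]; split=> // e [].
have [|P [HP wP vP]] := IH; first by move=> T0 T0f; apply: Hfe; rewrite inE T0f orbT.
have [[T' R] HF [[TT' card_res] varsR]] := Hfe T (mem_head T f).
(* [valid_stem] elaborates [#|_|] through another [mem] instance; restate it so that lia
   sees the same atom as [cardE] below. *)
rewrite /= in TT' varsR; change (is_true (#|T :\: T'| <= 2 * k)%N) in card_res.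
have rR : all (fun l => l.1 \in R) (enum (T :\: T')).
  by apply/allP => l; rewrite mem_enum => lT; apply: (subsetP varsR); exact: imset_f.
have M0 : 0 <= M by lia.
have size_res : Z.of_nat (size (enum (T :\: T'))) <= M by rewrite -cardE; lia.
have [Q [HQ wQ vQ]] := stem_repr_aug_monos HF (stem_repr_selector T' a L rR M0 size_res).
have -> : size (T :: f) = (size f).+1 by [].
exists (Q ++ P); split.
- by move=> e /List.in_app_iff [/HQ|/HP].
- rewrite poly_weight_cat; lia.
- move=> x; have -> : dnf_val (T :: f) x = term_val x T || dnf_val f x by [].
  rewrite poly_val_cat vQ.
  have [v0 v_hi v_lo] := stem_selector_bounds x L TT' (conj M1 (proj2 HM)) size_res.
  have [P0 P_hi P_lo] := vP x.
  case: (boolP (term_val x T)) => [/v_hi|/v_lo]; case: (boolP (dnf_val f x)) => [/P_hi|/P_lo];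
    split=> //; lia.
Qed.

End DNFThreshold.

Definition dnf_degree (k : nat) : nat := (Nat.sqrt (2 * k)).+1 * 2 * (Nat.log2 k).+1.

Definition dnf_weight (k : nat) : Z :=
  (Z.of_nat k * ((2 * Z.of_nat k + 5) ^ 2) ^ Z.of_nat (dnf_degree k))%Z.

Lemma dnf_aug_PTF n k (f : seq (term n)) F : (0 < k)%N -> size f = k ->
  fully_expressive k F f -> aug_PTF F (dnf_degree k) (dnf_weight k) (dnf_val f).
Proof.
move=> k0 size_f Hfe; set a := (Nat.sqrt (2 * k)).+1; set L := (Nat.log2 k).+1.
have Ha : (2 * Z.of_nat k <= Z.of_nat a * Z.of_nat a)%Z.
  by have [_] := Nat.sqrt_spec (2 * k) (le_0_n _); rewrite /a; lia.
have HL : (Z.of_nat k < 4 ^ Z.of_nat L)%Z.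
  have [_ /Nat2Z.inj_lt] := Nat.log2_spec k (elimT ltP k0).
  have := Z.pow_le_mono_l 2 4 (Z.of_nat L); rewrite Nat2Z.inj_pow -/L; lia.
have [|P [HP wP vP]] := dnf_threshold_poly L Hfe (conj (Z.le_refl _) Ha); first lia.
set theta := (((2 * Z.of_nat k * (2 * Z.of_nat k)) ^ Z.of_nat a) ^ Z.of_nat L)%Z in vP.
have theta_pos : (0 < theta)%Z by apply: Z.pow_pos_nonneg; [apply: Z.pow_pos_nonneg|]; lia.
exists P, (IZR (4 ^ Z.of_nat L * theta)); split; first done.
split; first by rewrite size_f in wP.
move=> x; have [_ v_hi v_lo] := vP x.
split=> [/v_hi /IZR_le //|/le_IZR Hge].
by apply/negbNE/negP => /v_lo; rewrite size_f; nia.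
Qed.

Section RealBounds.
Local Open Scope R_scope.

Lemma ln_le x y : 0 < x -> x <= y -> ln x <= ln y.
Proof.
move=> x0 /Rle_lt_or_eq_dec [xy|<-]; last exact: Rle_refl.
exact/Rlt_le/ln_increasing.
Qed.

Lemma ln_ge1 x : 3 <= x -> 1 <= ln x.
Proof.
move=> x3; rewrite -[1]ln_exp; apply: ln_le; first exact: exp_pos.
by have := exp_le_3; lra.
Qed.

Lemma pow_le_Rpower2 x m y : 0 < x -> INR m * ln x <= y * ln 2 -> x ^ m <= Rpower 2 y.
Proof.
move=> x0 Hm; have ln2 := ln_lt_2.
have -> : x ^ m = Rpower 2 (INR m * ln x / ln 2).
  by rewrite -Rpower_pow // /Rpower; f_equal; field; lra.
apply: Rle_Rpower; first lra.
apply: (Rmult_le_reg_r (ln 2)); first lra.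
by rewrite /Rdiv Rmult_assoc Rinv_l ?Rmult_1_r //; lra.
Qed.

Lemma INR_dnf_degree_le k : (4 <= k)%N ->
  INR (dnf_degree k) <= 18 * sqrt (INR k) * ln (INR k).
Proof.
move=> k4; have K4 : 4 <= INR k by rewrite INR_IZR_INZ; apply: IZR_le; lia.
have t1 : 1 <= sqrt (INR k) by rewrite -sqrt_1; apply: sqrt_le_1_alt; lra.
have tt : sqrt (INR k) * sqrt (INR k) = INR k by apply: sqrt_sqrt; lra.
have l1 : 1 <= ln (INR k) by apply: ln_ge1; lra.
have Ha : INR (Nat.sqrt (2 * k)).+1 <= 3 * sqrt (INR k).
  have [s_le _] := Nat.sqrt_spec (2 * k) (le_0_n _).
  have hs : INR (Nat.sqrt (2 * k)) * INR (Nat.sqrt (2 * k)) <= 2 * INR k.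
    by rewrite -mult_INR (_ : 2 = INR 2) // -mult_INR; apply: le_INR.
  have := pos_INR (Nat.sqrt (2 * k)); rewrite S_INR; nra.
have HL : INR (Nat.log2 k).+1 <= 3 * ln (INR k).
  have [pow_le _] := Nat.log2_spec k (elimT ltP (leq_trans (isT : 0 < 4)%N k4)).
  have : INR (Nat.log2 k) * ln 2 <= ln (INR k).
    rewrite -ln_pow; last lra.
    apply: ln_le; first by apply: pow_lt; lra.
    by rewrite (_ : 2 = INR 2) // -pow_INR; apply: le_INR.
  have := ln_lt_2; have := pos_INR (Nat.log2 k); rewrite S_INR; nra.
rewrite /dnf_degree !mult_INR (_ : INR 2 = 2) //.
have := pos_INR (Nat.sqrt (2 * k)).+1; have := pos_INR (Nat.log2 k).+1; nra.
Qed.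

Lemma IZR_dnf_weight_le k : (4 <= k)%N ->
  IZR (dnf_weight k) <= Rpower 2 (200 * sqrt (INR k) * ln (INR k) ^ 2).
Proof.
move=> k4; have := INR_dnf_degree_le k4; rewrite /dnf_weight.
move: (dnf_degree k) => d Hd.
have K4 : 4 <= INR k by rewrite INR_IZR_INZ; apply: IZR_le; lia.
rewrite mult_IZR -pow_IZR Z.pow_2_r mult_IZR plus_IZR mult_IZR -INR_IZR_INZ.
move: (INR k) K4 Hd => K K4 Hd.
have t1 : 1 <= sqrt K by rewrite -sqrt_1; apply: sqrt_le_1_alt; lra.
have l1 : 1 <= ln K by apply: ln_ge1; lra.
apply: (Rle_trans _ (K ^ (4 * d).+1)).
  rewrite /= pow_mult; apply: Rmult_le_compat_l; first lra.
  apply: pow_incr; split; first nra.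
  have K2 : 16 * (K * K) <= K * K * (K * K) by apply: Rmult_le_compat_r; nra.
  rewrite /=; nra.
apply: pow_le_Rpower2; first lra.
rewrite S_INR mult_INR (_ : INR 4 = 4); last by rewrite /=; lra.
move: (sqrt K) (ln K) t1 l1 Hd => s l t1 l1 Hd.
have H1 : (4 * INR d + 1) * l <= (4 * (18 * s * l) + 1) * l by apply: Rmult_le_compat_r; lra.
have H2 : l <= s * l * l by nra.
have H3 : 100 * (s * l * l) <= 200 * (s * l * l) * ln 2 by have := ln_lt_2; nra.
nra.
Qed.

End RealBounds.

Theorem lemma5p5 :
  exists (C : R) (k0 : nat), Rlt 0 C /\
  forall (k n : nat), (k0 <= k)%N ->
  forall (f : seq (term n)) (F : {set term n * {set 'I_n}}),
    size f = k ->
    (forall p, p \in F -> eligible p) ->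
    (exists R0, (set0, R0) \in F) ->
    fully_expressive k F f ->
    exists (d : nat) (W : Z),
      Rle (INR d) (Rmult (Rmult C (sqrt (INR k))) (ln (INR k))) /\
      Rle (IZR W) (Rpower 2 (Rmult (Rmult C (sqrt (INR k))) (pow (ln (INR k)) 2))) /\
      aug_PTF F d W (dnf_val f).
Proof.
exists (200 : R), 4%N; split; first lra.
move=> k n k4 f F size_f _ _ Hfe.
exists (dnf_degree k), (dnf_weight k); split; last split.
- have := INR_dnf_degree_le k4; have := sqrt_pos (INR k).
  have : Rle 1 (ln (INR k)) by apply: ln_ge1; rewrite INR_IZR_INZ; apply: IZR_le; lia.
  nra.
- exact: IZR_dnf_weight_le.
- by apply: dnf_aug_PTF Hfe; first exact: leq_trans k4.
Qed.
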